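(* Let $A$ be a finite set and $p : A \to [0,1]$. Let $\{X_i(u)\}_{i \ge 1, u \in A}$ be independent random variables with $X_i(u) \sim \mathrm{Bernoulli}(p(u))$. For $n \ge 1$ define $U_n(u) := \mathds{1}\{\sum_{i=1}^n X_i(u) = 1\}$, $\hat R_n := \frac{1}{n}\sum_{u \in A} U_n(u)$, and $\lambda := \sum_{u \in A} p(u)$. Then for every integer $s \ge 3$ and every $\delta \in (0,1)$, \[ \mathbb{P}\left( \hat R_s \le \hat R_{s-1} - \frac{\lambda}{e(s-2)} - \sqrt{\frac{2\lambda}{s-1}\log(1/\delta)} - \frac{1}{3(s-1)}\log(1/\delta) \right) \le \delta . \]
   Context: Model: a single influencer is connected to a finite set $A$ of basic nodes; at each selection $i$, each node $u\in A$ is activated independently with probability $p(u)$, independently across selections. $\hat R_n$ is the Good-Turing estimator of the remaining potential after $n$ selections; $e$ is Euler's number. *)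

From Stdlib Require Import Reals.
From mathcomp Require Import all_boot.
Set Implicit Arguments. Unset Strict Implicit. Unset Printing Implicit Defensive.

Local Open Scope R_scope.
Definition Rleb (x y : R) : bool := if Rle_dec x y then true else false.

(* Sample space for the first s selections: an outcome w assigns to each
   selection index i : 'I_s (selection i+1) and node u the activation bit
   X_{i+1}(u) = w (i, u). *)
Definition outcome (A : finType) (s : nat) := {ffun 'I_s * A -> bool}.

Definition weight (A : finType) (s : nat) (p : A -> R) (w : outcome A s) : R :=
  \big[Rmult/1]_(k : 'I_s * A) (if w k then p k.2 else (1 - p k.2)).

Definition prob (A : finType) (s : nat) (p : A -> R) (E : outcome A s -> bool) : R :=
  \big[Rplus/0]_(w : outcome A s | E w) weight p w.

Definition nact (A : finType) (s : nat) (w : outcome A s) (n : nat) (u : A) : nat :=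
  #|[set i : 'I_s | (i < n)%N && w (i, u)]|.

Definition Un (A : finType) (s : nat) (w : outcome A s) (n : nat) (u : A) : bool :=
  nact w n u == 1%N.

Definition Rhat (A : finType) (s : nat) (w : outcome A s) (n : nat) : R :=
  (INR #|[set u : A | Un w n u]| / INR n).

Definition lam (A : finType) (p : A -> R) : R := \big[Rplus/0]_(u : A) p u.

From Stdlib Require Import Reals Lra.
From Coquelicot Require Import Coquelicot.
From mathcomp Require Import all_boot.
From mathcomp Require Import Rstruct.
Set Implicit Arguments. Unset Strict Implicit. Unset Printing Implicit Defensive.
Local Open Scope R_scope.

(* Write R̂_{s-1} - R̂_s = Σ_u Z_u, where Z_u = U_{s-1}(u)/(s-1) - U_s(u)/s only
   depends on the activations of node u, so that the Z_u are independent.  Each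
   Z_u is at most 1/(s-1), has mean p²(1-p)^{s-2} <= p/(e(s-2)), and satisfies
   Z_u² <= N_u/(s(s-1)) where N_u is the number of activations of u, whose mean
   is s p.  The Chernoff argument with Bernstein's bound
   e^y <= 1 + y + y²/(2(1-y/3)) (y < 3) then yields the Bernstein tail with mean
   bound λ/(e(s-2)), variance proxy λ/(s-1) and range 1/(s-1).  If λ = 0, no node
   is ever activated and the event has probability 0. *)

Section RealBigOps.

Variables (I : finType) (P : pred I).

Lemma Rsum_le (F G : I -> R) :
  (forall i, P i -> F i <= G i) ->
  \big[Rplus/0]_(i | P i) F i <= \big[Rplus/0]_(i | P i) G i.
Proof. by move=> FG; apply: (big_ind2 (fun x y => x <= y)) => // *; lra. Qed.

Lemma Rsum_sub (F G : I -> R) :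
  \big[Rplus/0]_(i | P i) (F i - G i) =
  \big[Rplus/0]_(i | P i) F i - \big[Rplus/0]_(i | P i) G i.
Proof.
rewrite /Rminus big_split /=; congr (_ + _).
by symmetry; apply: (big_morph Ropp) => [x y|]; [exact: Ropp_plus_distr | exact: Ropp_0].
Qed.

Lemma Rsum_ge0 (F : I -> R) :
  (forall i, P i -> 0 <= F i) -> 0 <= \big[Rplus/0]_(i | P i) F i.
Proof. by move=> F0; apply: (big_ind (fun x => 0 <= x)) => // *; lra. Qed.

Lemma Rprod_ge0 (F : I -> R) :
  (forall i, P i -> 0 <= F i) -> 0 <= \big[Rmult/1]_(i | P i) F i.
Proof. by move=> F0; apply: (big_ind (fun x => 0 <= x)) => // *; [lra | nra]. Qed.

Lemma Rprod_le (F G : I -> R) :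
  (forall i, P i -> 0 <= F i <= G i) ->
  \big[Rmult/1]_(i | P i) F i <= \big[Rmult/1]_(i | P i) G i.
Proof.
move=> FG; suff [] : 0 <= \big[Rmult/1]_(i | P i) F i <= \big[Rmult/1]_(i | P i) G i by [].
apply: (big_ind2 (fun x y => 0 <= x <= y)) => //; first lra.
by move=> a b c d [a0 ab] [c0 cd]; split; [nra | apply: Rmult_le_compat].
Qed.

Lemma exp_Rsum (F : I -> R) :
  exp (\big[Rplus/0]_(i | P i) F i) = \big[Rmult/1]_(i | P i) exp (F i).
Proof. by apply: (big_morph exp) => [x y|]; [exact: exp_plus | exact: exp_0]. Qed.

Lemma Rsum_const (a : R) : \big[Rplus/0]_(i | P i) a = INR #|P| * a.
Proof.
rewrite big_const; elim: #|P| => [|k IH]; first by rewrite /=; lra.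
by rewrite S_INR /= IH; lra.
Qed.

Lemma Rprod_const (a : R) : \big[Rmult/1]_(i | P i) a = a ^ #|P|.
Proof. by rewrite big_const; elim: #|P| => //= k ->. Qed.

End RealBigOps.

Definition b2R (b : bool) : R := if b then 1 else 0.

Lemma INR_card_set (T : finType) (P : pred T) :
  INR #|[set x | P x]| = \big[Rplus/0]_x b2R (P x).
Proof.
rewrite -sum1_card big_mkcond /= (big_morph INR (id1 := 0) (op1 := Rplus)) //.
  by apply: eq_bigr => x _; rewrite inE; case: (P x).
exact: plus_INR.
Qed.

Lemma Rprod_b2R (T : finType) (B : pred T) :
  \big[Rmult/1]_i b2R (B i) = b2R [forall i, B i].
Proof.
case: (boolP [forall i, B i]) => [/forallP allB | ].
  by rewrite big1 // => i _; rewrite allB.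
rewrite negb_forall => /existsP [j /negbTE Bj].
by rewrite (bigD1 j) //= Bj Rmult_0_l.
Qed.

Lemma card_ord_lt (s k : nat) : (k <= s)%N -> #|[pred j : 'I_s | (j < k)%N]| = k.
Proof.
move=> ks; rewrite -sum1_card (eq_bigl (fun i : 'I_s => true && (i < k)%N)) //.
by rewrite (big_ord_narrow_cond (P := xpredT)) //= sum1_card card_ord.
Qed.

Lemma Rsum_b2R_set1 (T : finType) (S : {set T}) :
  \big[Rplus/0]_t b2R (S == [set t]) = b2R (#|S| == 1%N).
Proof.
case: (boolP (#|S| == 1%N)) => [/cards1P [t ->] | S_not1].
  rewrite (bigD1 t) //= eqxx big1 /=; first lra.
  by move=> i /negbTE ti; case: eqP => // /setP /(_ t); rewrite !inE eqxx eq_sym ti.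
by rewrite big1 // => t _; case: eqP => // S1; rewrite S1 cards1 in S_not1.
Qed.

Section BernoulliColumn.

Variables (s : nat) (x : R).

Definition bern_weight (c : {ffun 'I_s -> bool}) : R :=
  \big[Rmult/1]_i (if c i then x else 1 - x).

Definition bern_expect (f : {ffun 'I_s -> bool} -> R) : R :=
  \big[Rplus/0]_c (bern_weight c * f c).

Definition nhits (c : {ffun 'I_s -> bool}) (k : nat) : nat :=
  #|[set i : 'I_s | (i < k)%N && c i]|.

Lemma nhits_mono c k l : (k <= l)%N -> (nhits c k <= nhits c l)%N.
Proof.
move=> kl; apply/subset_leq_card/subsetP => i; rewrite !inE => /andP [ik ->].
by rewrite (leq_trans ik kl).
Qed.

Lemma bern_expect_ext f g : (forall c, f c = g c) -> bern_expect f = bern_expect g.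
Proof. by move=> fg; apply: eq_bigr => c _; rewrite fg. Qed.

Lemma bern_expectD f g :
  bern_expect (fun c => f c + g c) = bern_expect f + bern_expect g.
Proof. by rewrite /bern_expect -big_split; apply: eq_bigr => c _ /=; ring. Qed.

Lemma bern_expectZ a f : bern_expect (fun c => a * f c) = a * bern_expect f.
Proof. by rewrite /bern_expect big_distrr; apply: eq_bigr => c _ /=; ring. Qed.

Lemma bern_expect_sum (J : finType) (F : J -> {ffun 'I_s -> bool} -> R) :
  bern_expect (fun c => \big[Rplus/0]_j F j c) = \big[Rplus/0]_j bern_expect (F j).
Proof.
rewrite /bern_expect (eq_bigr (fun c => \big[Rplus/0]_j (bern_weight c * F j c))).
  exact: exchange_big.
by move=> c _; rewrite big_distrr.
Qed.

Lemma bern_weight_ge0 c : 0 <= x <= 1 -> 0 <= bern_weight c.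
Proof. by move=> x01; apply: Rprod_ge0 => i _; case: (c i); lra. Qed.

Lemma bern_expect_le f g : 0 <= x <= 1 ->
  (forall c, f c <= g c) -> bern_expect f <= bern_expect g.
Proof.
move=> x01 fg; apply: Rsum_le => c _.
by apply: Rmult_le_compat_l; [exact: bern_weight_ge0 | exact: fg].
Qed.

Lemma bern_expect_ge0 f : 0 <= x <= 1 -> (forall c, 0 <= f c) -> 0 <= bern_expect f.
Proof.
move=> x01 f0; apply: Rsum_ge0 => c _.
by apply: Rmult_le_pos; [exact: bern_weight_ge0 | exact: f0].
Qed.

Lemma bern_expect_prod (g : 'I_s -> bool -> R) :
  bern_expect (fun c => \big[Rmult/1]_i g i (c i)) =
  \big[Rmult/1]_i (x * g i true + (1 - x) * g i false).
Proof.
rewrite (eq_bigr (fun i => \big[Rplus/0]_(b : bool) ((if b then x else 1 - x) * g i b))).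
  by rewrite bigA_distr_bigA; apply: eq_bigr => c _; rewrite big_split.
by move=> i _; rewrite big_bool.
Qed.

Lemma bern_expect1 : bern_expect (fun _ => 1) = 1.
Proof.
rewrite -(bern_expect_ext (f := fun c => \big[Rmult/1]_(i : 'I_s) 1)) => [|c]; last by rewrite big1.
by rewrite (bern_expect_prod (fun _ _ => 1)) big1 // => i _; ring.
Qed.

Lemma bern_expect_bit i : bern_expect (fun c => b2R (c i)) = x.
Proof.
pose g j b := if j == i then b2R b else 1.
have gi c : \big[Rmult/1]_j g j (c j) = b2R (c i).
  by rewrite (bigD1 i) //= /g eqxx big1 ?Rmult_1_r // => j /negbTE ->.
rewrite -(bern_expect_ext gi) bern_expect_prod (bigD1 i) //= /g eqxx big1 /=; first ring.
by move=> j /negbTE ->; ring.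
Qed.

Lemma bern_expect_nhits : bern_expect (fun c => INR (nhits c s)) = INR s * x.
Proof.
have nhitsE c : INR (nhits c s) = \big[Rplus/0]_i b2R (c i).
  by rewrite INR_card_set; apply: eq_bigr => i _; rewrite ltn_ord.
rewrite (bern_expect_ext nhitsE) bern_expect_sum.
by rewrite (eq_bigr (fun _ => x)) ?Rsum_const ?card_ord // => i _; exact: bern_expect_bit.
Qed.

Lemma bern_expect_nhits_eq1 k : (k <= s)%N ->
  bern_expect (fun c => b2R (nhits c k == 1%N)) = INR k * x * (1 - x) ^ (k - 1).
Proof.
move=> ks.
pose g (i0 j : 'I_s) b := b2R (((j < k)%N && b) == (j == i0)).
have nhits_eq1 c : b2R (nhits c k == 1%N) =
    \big[Rplus/0]_i0 \big[Rmult/1]_j g i0 j (c j).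
  rewrite -Rsum_b2R_set1; apply: eq_bigr => i0 _; rewrite Rprod_b2R; congr b2R.
  apply/eqP/forallP => [/setP set_eq j | all_j]; first by move: (set_eq j); rewrite !inE => ->.
  by apply/setP => j; rewrite !inE; apply/eqP; exact: all_j.
have single_i0 i0 : bern_expect (fun c => \big[Rmult/1]_j g i0 j (c j)) =
    b2R (i0 < k)%N * (x * (1 - x) ^ (k - 1)).
  rewrite bern_expect_prod (bigD1 i0) //= /g eqxx andbT.
  rewrite (eq_bigr (fun j : 'I_s => if (j < k)%N then 1 - x else 1)); last first.
    by move=> j /negbTE ->; case: (j < k)%N => /=; ring.
  case i0k: (i0 < k)%N => /=; last ring.
  rewrite -big_mkcondr /= Rprod_const.
  have card_rest : #|(fun j : 'I_s => (j != i0) && (j < k)%N)| = (k - 1)%N.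
    have := cardD1 i0 [pred j : 'I_s | (j < k)%N].
    rewrite card_ord_lt // inE i0k add1n => k_eq.
    by rewrite [in RHS]k_eq subn1 /=; apply: eq_card => j; rewrite !inE.
  by rewrite card_rest; ring.
rewrite (bern_expect_ext nhits_eq1) bern_expect_sum (eq_bigr _ (fun i0 _ => single_i0 i0)).
rewrite -big_distrl /= -big_mkcond /= Rsum_const card_ord_lt //; ring.
Qed.

End BernoulliColumn.

Section NodeColumns.

Variables (A : finType) (s : nat) (p : A -> R).
Hypothesis p01 : forall u, 0 <= p u <= 1.

Definition column (w : outcome A s) (u : A) : {ffun 'I_s -> bool} := [ffun i => w (i, u)].

Lemma nact_column w n u : nact w n u = nhits (column w u) n.
Proof. by apply: eq_card => i; rewrite !inE ffunE. Qed.

Lemma weight_ge0 (w : outcome A s) : 0 <= weight p w.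
Proof. by apply: Rprod_ge0 => k _; have := p01 k.2; case: (w k) => /=; lra. Qed.

Lemma sum_weight_prod_column (G : A -> {ffun 'I_s -> bool} -> R) :
  \big[Rplus/0]_w (weight p w * \big[Rmult/1]_u G u (column w u)) =
  \big[Rmult/1]_u bern_expect (p u) (G u).
Proof.
rewrite /bern_expect bigA_distr_bigA /=.
pose of_columns (W : {ffun A -> {ffun 'I_s -> bool}}) : outcome A s := [ffun k => W k.2 k.1].
pose to_columns (w : outcome A s) : {ffun A -> {ffun 'I_s -> bool}} := [ffun u => column w u].
have of_columnsK : cancel of_columns to_columns.
  by move=> W; apply/ffunP => u; apply/ffunP => i; rewrite !ffunE.
have to_columnsK : cancel to_columns of_columns by move=> w; apply/ffunP => [[i u]]; rewrite !ffunE.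
rewrite (reindex of_columns) /=; last by apply: onW_bij; exists to_columns.
apply: eq_bigr => W _; rewrite big_split /=; congr (_ * _).
  rewrite /weight /bern_weight (eq_bigr (fun k => if W k.2 k.1 then p k.2 else 1 - p k.2)).
    by rewrite -(pair_bigA _ (fun i u => if W u i then p u else 1 - p u)) exchange_big.
  by move=> k _; rewrite ffunE.
by apply: eq_bigr => u _; congr (G u _); apply/ffunP => i; rewrite !ffunE.
Qed.

Lemma prob_le_chernoff (Z : {ffun 'I_s -> bool} -> R) (E : outcome A s -> bool) th t0 :
  0 <= th -> (forall w, E w -> t0 <= \big[Rplus/0]_u Z (column w u)) ->
  prob p E <= exp (- th * t0) *
              \big[Rmult/1]_u bern_expect (p u) (fun c => exp (th * Z c)).
Proof.
move=> th0 E_ge.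
rewrite -(sum_weight_prod_column (fun _ c => exp (th * Z c))) big_distrr /prob big_mkcond /=.
apply: Rsum_le => w _; rewrite -exp_Rsum -Rmult_assoc [exp _ * _]Rmult_comm Rmult_assoc.
rewrite -big_distrr -exp_plus /=.
have w0 := weight_ge0 w.
case: (boolP (E w)) => [/E_ge t0_le | _] /=; last exact/Rmult_le_pos/Rlt_le/exp_pos.
have : 1 <= exp (- th * t0 + th * \big[Rplus/0]_u Z (column w u)).
  by have := exp_ineq1_le (- th * t0 + th * \big[Rplus/0]_u Z (column w u)); nra.
nra.
Qed.

Lemma prob_eq0_of_activation (E : outcome A s -> bool) :
  (forall u, p u = 0) -> (forall w, E w -> [exists k, w k]) -> prob p E = 0.
Proof.
move=> p0 E_act; apply: big1 => w /E_act /existsP [k wk].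
by rewrite /weight (bigD1 k) //= wk p0 Rmult_0_l.
Qed.

End NodeColumns.

Section Decrement.

Variable m : nat.

Definition decr (c : {ffun 'I_m.+2 -> bool}) : R :=
  b2R (nhits c m.+1 == 1%N) / INR m.+1 - b2R (nhits c m.+2 == 1%N) / INR m.+2.

Lemma Rhat_sub_decr (A : finType) (w : outcome A m.+2) :
  Rhat w m.+1 - Rhat w m.+2 = \big[Rplus/0]_u decr (column w u).
Proof.
rewrite (eq_bigr (fun u => b2R (Un w m.+1 u) / INR m.+1 - b2R (Un w m.+2 u) / INR m.+2)).
  by rewrite Rsum_sub /Rhat !INR_card_set /Rdiv -!big_distrl.
by move=> u _; rewrite /decr /Un !nact_column.
Qed.

Lemma decr_le c : decr c <= 1 / INR m.+1.
Proof.
have n0 := pos_INR m.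
rewrite /decr /b2R !S_INR /Rdiv.
have := Rinv_0_lt_compat (INR m + 1) ltac:(lra).
have := Rinv_0_lt_compat (INR m + 1 + 1) ltac:(lra).
by case: (_ == _); case: (_ == _) => /=; lra.
Qed.

Lemma decr_sqr_le c : decr c ^ 2 <= INR (nhits c m.+2) / (INR m.+2 * INR m.+1).
Proof.
have n0 := pos_INR m.
have := nhits_mono c (leqnSn m.+1); rewrite /decr.
set a := nhits c m.+1; set b := nhits c m.+2 => ab.
apply/(Rle_div_r _ _ (INR m.+2 * INR m.+1)); first by rewrite !S_INR; nra.
rewrite !S_INR /b2R; set n := INR m in n0 *.
case: (eqVneq a 1%N) => [a1 | _]; case: (eqVneq b 1%N) => [b1 | b_not1].
- rewrite b1 (_ : _ * _ = 1 / ((n + 1) * (n + 1 + 1))) /=; last by field; lra.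
  by apply/(Rle_div_l _ _ ((n + 1) * (n + 1 + 1))); nra.
- have b2 : (2 <= b)%N by move: ab b_not1; rewrite a1; case: b => [|[]].
  have /= b_ge2 := le_INR 2 b (elimT leP b2).
  rewrite (_ : _ * _ = (n + 1 + 1) / (n + 1)); last by field; lra.
  by apply/(Rle_div_l _ _ (n + 1)); nra.
- rewrite b1 (_ : _ * _ = (n + 1) / (n + 1 + 1)) /=; last by field; lra.
  by apply/(Rle_div_l _ _ (n + 1 + 1)); nra.
- have := pos_INR b; rewrite (_ : _ * _ = 0); first lra.
  by rewrite /Rdiv; ring.
Qed.

Lemma bern_expect_decr x : bern_expect x decr = x ^ 2 * (1 - x) ^ m.
Proof.
rewrite (@bern_expect_ext _ _ _ (fun c => / INR m.+1 * b2R (nhits c m.+1 == 1%N) +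
                   (- / INR m.+2) * b2R (nhits c m.+2 == 1%N))); last first.
  by move=> c; rewrite /decr /Rdiv; ring.
rewrite bern_expectD !bern_expectZ !bern_expect_nhits_eq1 // !subn1 !succnK.
rewrite -tech_pow_Rmult; have := pos_INR m; rewrite !S_INR => n0; field; lra.
Qed.

End Decrement.

Definition bernstein_ratio (y : R) : R := (1 + y + y ^ 2 / (2 * (1 - y / 3))) * exp (- y).

Lemma is_derive_bernstein_ratio y : y < 3 ->
  is_derive bernstein_ratio y (exp (- y) * y ^ 3 / (18 * (1 - y / 3) ^ 2)).
Proof. by move=> y3; rewrite /bernstein_ratio; auto_derive; [lra | field; lra]. Qed.

(* The derivative of the ratio has the sign of [y], so the ratio is minimal at [y = 0]. *)
Lemma exp_le_bernstein_poly y : y < 3 -> exp y <= 1 + y + y ^ 2 / (2 * (1 - y / 3)).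
Proof.
move=> y3.
have below3 c : c <= Rmax 0 y -> c < 3.
  by move=> cy; apply: (Rle_lt_trans _ _ _ cy); apply: Rmax_lub_lt; lra.
have deriv c : Rmin 0 y < c < Rmax 0 y ->
    is_derive bernstein_ratio c (exp (- c) * c ^ 3 / (18 * (1 - c / 3) ^ 2)).
  by move=> [_ /Rlt_le /below3]; exact: is_derive_bernstein_ratio.
have cont c : Rmin 0 y <= c <= Rmax 0 y -> continuity_pt bernstein_ratio c.
  move=> [_ /below3 c3]; apply/continuity_pt_filterlim/ex_derive_continuous.
  by eexists; exact: is_derive_bernstein_ratio.
have [c [c_between ratio_inc]] := MVT_gen _ _ _ _ deriv cont.
have cy : 0 <= c * y by move: c_between; rewrite /Rmin /Rmax; case: Rle_dec; nra.
have c3 := below3 c (proj2 c_between).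
have den : 0 < 18 * (1 - c / 3) ^ 2 by apply: Rmult_lt_0_compat; [lra | apply: pow_lt; lra].
have : 0 <= exp (- c) * c ^ 3 / (18 * (1 - c / 3) ^ 2) * (y - 0).
  rewrite (_ : _ * _ = exp (- c) / (18 * (1 - c / 3) ^ 2) * c ^ 2 * (c * y)); last by field; lra.
  apply: Rmult_le_pos; last exact: cy.
  by apply: Rmult_le_pos; [apply: Rdiv_le_0_compat; [exact/Rlt_le/exp_pos | exact: den] | nra].
rewrite -ratio_inc /bernstein_ratio Ropp_0 exp_0.
have : exp (- y) * exp y = 1 by rewrite -exp_plus Rplus_opp_l exp_0.
have := exp_pos y; have := exp_pos (- y).
rewrite (_ : 1 + 0 + 0 ^ 2 / (2 * (1 - 0 / 3)) = 1); last by field.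
move: (exp y) (exp (- y)) (1 + y + _) => ey eny Q; nra.
Qed.

Lemma exp_le_bernstein y a : y <= a < 3 -> exp y <= 1 + y + y ^ 2 / (2 * (1 - a / 3)).
Proof.
move=> [ya a3]; apply: (Rle_trans _ _ _ (exp_le_bernstein_poly (Rle_lt_trans _ _ _ ya a3))).
apply: Rplus_le_compat_l; apply: Rmult_le_compat_l; first exact: pow2_ge_0.
by apply: Rinv_le_contravar; lra.
Qed.

Lemma pow_exp a k : exp a ^ k = exp (INR k * a).
Proof.
elim: k => [|k IH]; first by rewrite Rmult_0_l exp_0.
by rewrite S_INR -tech_pow_Rmult IH -exp_plus; congr exp; ring.
Qed.

Lemma mul_exp_neg_le y : y * exp (- y) <= / exp 1.
Proof.
have y_le : y <= exp (y - 1) by have := exp_ineq1_le (y - 1); lra.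
have -> : / exp 1 = exp (y - 1) * exp (- y) by rewrite -exp_plus -exp_Ropp; congr exp; ring.
by apply: Rmult_le_compat_r => //; exact/Rlt_le/exp_pos.
Qed.

(* [x (1 - x)^m <= x e^{-m x}], and [t e^{-t} <= 1/e] at [t = m x]. *)
Lemma sqr_mul_pow_compl_le m x : (1 <= m)%N -> 0 <= x <= 1 ->
  x ^ 2 * (1 - x) ^ m <= x / (exp 1 * INR m).
Proof.
move=> m1 x01.
have m_ge1 : 1 <= INR m by apply: (le_INR 1); apply/leP.
have pow_le_exp : (1 - x) ^ m <= exp (- (INR m * x)).
  rewrite Ropp_mult_distr_r -pow_exp; apply: pow_incr.
  by have := exp_ineq1_le (- x); lra.
have key := mul_exp_neg_le (INR m * x).
have pow_ge0 : 0 <= (1 - x) ^ m by apply: pow_le; lra.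
have mx_le : INR m * (x * (1 - x) ^ m) <= / exp 1.
  by apply: Rle_trans key; rewrite -Rmult_assoc; apply: Rmult_le_compat_l; nra.
rewrite /Rdiv Rinv_mult (_ : x ^ 2 * _ = x * (x * (1 - x) ^ m)); last by ring.
apply: Rmult_le_compat_l; first lra.
apply: (Rmult_le_reg_l (INR m)); first lra.
apply: (Rle_trans _ _ _ mx_le); right; field; split; [lra | exact/Rgt_not_eq/exp_pos].
Qed.

Lemma exp_le_compat x y : x <= y -> exp x <= exp y.
Proof. by case=> [/exp_increasing/Rlt_le | ->] //; exact: Rle_refl. Qed.

(* The Chernoff parameter [th] optimizing Bernstein's bound for the deviation [r + L/c]
   with [L = r^2/(2V)]: the exponent collapses to [-L]. *)
Lemma bernstein_exponent V c r th : 0 < V -> 0 < c -> 0 < r -> th = r / (V + r / c) ->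
  th < c /\
  - th * (r + r ^ 2 / (2 * V) / c) + th ^ 2 * V / (2 * (1 - th / c)) = - (r ^ 2 / (2 * V)).
Proof.
move=> V0 c0 r0 ->; have den : 0 < c * V + r by nra.
have -> : r / (V + r / c) = c * r / (c * V + r) by field; split; lra.
have cV := Rmult_lt_0_compat _ _ c0 V0.
split; last by field; repeat split; lra.
by apply/(Rlt_div_l _ _ _ den); have := Rmult_lt_0_compat _ _ c0 cV; lra.
Qed.

Lemma bern_expect_exp_decr_le m x th : 0 <= x <= 1 -> 0 <= th < 3 * INR m.+1 ->
  bern_expect x (fun c : {ffun 'I_m.+2 -> bool} => exp (th * decr c)) <=
  exp (th * (x ^ 2 * (1 - x) ^ m) +
       th ^ 2 * (x / INR m.+1) / (2 * (1 - th / (3 * INR m.+1)))).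
Proof.
move=> x01 [th0 th3].
have n1 : 0 < INR m.+1 by apply: lt_0_INR; apply/leP.
have n2 : 0 < INR m.+2 by apply: lt_0_INR; apply/leP.
set D := 2 * (1 - th / (3 * INR m.+1)).
have D0 : 0 < D.
  by have := proj2 (Rlt_div_l th 1 (3 * INR m.+1) ltac:(lra)) ltac:(lra); rewrite /D; lra.
set C := th ^ 2 / (INR m.+2 * INR m.+1 * D).
have pointwise (c : {ffun 'I_m.+2 -> bool}) :
    exp (th * decr c) <= 1 + th * decr c + C * INR (nhits c m.+2).
  have th_decr : th * decr c <= th / INR m.+1.
    apply: Rle_trans (Rmult_le_compat_l _ _ _ th0 (decr_le c)) _; right; field; lra.
  apply: (Rle_trans _ _ _ (exp_le_bernstein (conj th_decr _))).
    by apply/(Rlt_div_l _ _ _ n1); lra.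
  rewrite (_ : th / INR m.+1 / 3 = th / (3 * INR m.+1)); last by field; lra.
  apply/Rplus_le_compat_l; rewrite -/D Rpow_mult_distr /C.
  rewrite (_ : th ^ 2 / (INR m.+2 * INR m.+1 * D) * INR (nhits c m.+2) =
               th ^ 2 * (INR (nhits c m.+2) / (INR m.+2 * INR m.+1)) / D); last by field; lra.
  apply: Rmult_le_compat_r; first exact/Rlt_le/Rinv_0_lt_compat.
  by apply: Rmult_le_compat_l; [exact: pow2_ge_0 | exact: decr_sqr_le].
apply: (Rle_trans _ _ _ (bern_expect_le x01 pointwise)).
rewrite !bern_expectD bern_expect1 !bern_expectZ bern_expect_decr bern_expect_nhits.
apply: Rle_trans (exp_ineq1_le _); right; rewrite /C; field; lra.
Qed.

Section DecrementTail.

Variables (A : finType) (p : A -> R) (m : nat).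
Hypothesis p01 : forall u, 0 <= p u <= 1.
Hypothesis m_gt0 : (0 < m)%N.

Lemma prob_decr_ge_le_exp (E : outcome A m.+2 -> bool) th t0 :
  0 <= th < 3 * INR m.+1 ->
  (forall w, E w -> t0 <= \big[Rplus/0]_u decr (column w u)) ->
  prob p E <= exp (- th * t0 + th * (lam p / (exp 1 * INR m)) +
                   th ^ 2 * (lam p / INR m.+1) / (2 * (1 - th / (3 * INR m.+1)))).
Proof.
move=> th_range E_ge.
apply: (Rle_trans _ _ _ (prob_le_chernoff p01 (proj1 th_range) E_ge)).
rewrite Rplus_assoc exp_plus; apply: Rmult_le_compat_l; first exact/Rlt_le/exp_pos.
have mgf u : 0 <= bern_expect (p u) (fun c : {ffun 'I_m.+2 -> bool} => exp (th * decr c)) <=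
    exp (th * (p u ^ 2 * (1 - p u) ^ m) +
         th ^ 2 * (p u / INR m.+1) / (2 * (1 - th / (3 * INR m.+1)))).
  split; last exact: bern_expect_exp_decr_le.
  by apply: bern_expect_ge0 => // c; exact/Rlt_le/exp_pos.
apply: Rle_trans (Rprod_le (fun u _ => mgf u)) _.
rewrite -exp_Rsum; apply: exp_le_compat.
rewrite /lam /Rdiv !big_distrl !big_distrr !big_distrl -big_split /=.
apply: Rsum_le => u _; apply: Rplus_le_compat_r.
apply: Rmult_le_compat_l; first exact: (proj1 th_range).
exact: sqr_mul_pow_compl_le.
Qed.

Lemma lam_eq0 : lam p = 0 -> forall u, p u = 0.
Proof.
move=> lam0 u; have := p01 u; suff : p u <= lam p by lra.
rewrite /lam (bigD1 u) //=.
by have := Rsum_ge0 (P := fun v => v != u) (fun v _ => proj1 (p01 v)); lra.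
Qed.

Lemma prob_decr_ge_lam0 (E : outcome A m.+2 -> bool) t0 : lam p = 0 -> 0 < t0 ->
  (forall w, E w -> t0 <= \big[Rplus/0]_u decr (column w u)) -> prob p E = 0.
Proof.
move=> lam0 t0_gt0 E_ge; apply: prob_eq0_of_activation (lam_eq0 lam0) _ => w Ew.
apply: contraT => /existsPn no_act.
have := E_ge w Ew; rewrite big1; first lra.
move=> u _; have nhits0 k : nhits (column w u) k = 0%N.
  apply/eqP; rewrite cards_eq0; apply/eqP/setP => i.
  by rewrite !inE ffunE (negbTE (no_act _)) andbF.
by rewrite /decr !nhits0 /b2R /= /Rdiv; ring.
Qed.

Lemma prob_decr_tail (E : outcome A m.+2 -> bool) L : 0 < L ->
  (forall w, E w -> lam p / (exp 1 * INR m) + sqrt (2 * lam p / INR m.+1 * L) +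
                   1 / (3 * INR m.+1) * L <= Rhat w m.+1 - Rhat w m.+2) ->
  prob p E <= exp (- L).
Proof.
move=> L0; set c0 := lam p / _; set r := sqrt _; set t0 := _ + _ + _ => E_ge.
have {}E_ge w : E w -> t0 <= \big[Rplus/0]_u decr (column w u).
  by rewrite -Rhat_sub_decr; exact: E_ge.
have lam_ge0 : 0 <= lam p by apply: Rsum_ge0 => u _; case: (p01 u).
have n1 : 0 < INR m.+1 by apply: lt_0_INR; apply/leP.
have m0 : 0 < INR m by apply: lt_0_INR; apply/leP.
have c0_ge0 : 0 <= c0.
  by apply: Rdiv_le_0_compat => //; apply: Rmult_lt_0_compat => //; exact: exp_pos.
have L3 : 0 < 1 / (3 * INR m.+1) * L.
  by apply: Rmult_lt_0_compat => //; apply: Rdiv_lt_0_compat; lra.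
case: (Rle_lt_or_eq_dec _ _ lam_ge0) => [lam_gt0 | /esym lam0]; last first.
  rewrite (prob_decr_ge_lam0 lam0 _ E_ge); first exact/Rlt_le/exp_pos.
  by have := sqrt_pos (2 * lam p / INR m.+1 * L); rewrite /t0 -/r; lra.
set V := lam p / INR m.+1.
have V0 : 0 < V by apply: Rdiv_lt_0_compat.
have rad0 : 0 < 2 * lam p / INR m.+1 * L.
  by apply: Rmult_lt_0_compat => //; apply: Rdiv_lt_0_compat => //; lra.
have r0 : 0 < r by apply: sqrt_lt_R0.
have L_eq : L = r ^ 2 / (2 * V).
  by rewrite /r pow2_sqrt; [rewrite /V; field; lra | lra].
set th := r / (V + r / (3 * INR m.+1)).
have [th_lt exponent] := bernstein_exponent V0 (ltac:(lra) : 0 < 3 * INR m.+1) r0 (erefl th).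
have th_ge0 : 0 <= th.
  apply/Rlt_le/Rdiv_lt_0_compat => //.
  by have := Rdiv_lt_0_compat r (3 * INR m.+1) r0 ltac:(lra); lra.
apply: Rle_trans (prob_decr_ge_le_exp (conj th_ge0 th_lt) E_ge) _.
apply: exp_le_compat; rewrite -/V -/c0 /t0.
rewrite -L_eq in exponent; rewrite (_ : 1 / (3 * INR m.+1) * L = L / (3 * INR m.+1)).
  lra.
by field; lra.
Qed.

End DecrementTail.

Theorem mainTheorem3 (A : finType) (p : A -> R)
  (hp : forall u : A, 0 <= p u <= 1)
  (s : nat) (hs : (3 <= s)%N) (delta : R) (hd : 0 < delta < 1) :
  prob p (fun w : outcome A s =>
     Rleb (Rhat w s)
          (Rhat w (s - 1)%N
           - lam p / (exp 1 * INR (s - 2)%N)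
           - sqrt (2 * lam p / INR (s - 1)%N * ln (1 / delta))
           - 1 / (3 * INR (s - 1)%N) * ln (1 / delta)))
   <= delta.
Proof.
case: s hs => [|[|m]] // m_gt0; rewrite !subSS !subn0.
have L0 : 0 < ln (1 / delta).
  by rewrite -ln_1; apply: ln_increasing; [lra | apply/(Rlt_div_r _ _ _ (proj1 hd)); lra].
have exp_L : exp (- ln (1 / delta)) = delta.
  by rewrite /Rdiv Rmult_1_l ln_Rinv ?Ropp_involutive ?exp_ln //; lra.
apply: (Rle_trans _ _ _ _ (Req_le _ _ exp_L)); apply: (prob_decr_tail hp m_gt0 L0) => w.
by rewrite /Rleb; case: Rle_dec => // le_Rhat _; lra.
Qed.
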